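(* Let $k=k(n)$ be an integer with $\frac{n}{4\ln n}<k\le n$. There is a constant $c>0$ such that if $r>\sqrt{\frac{c\ln\ln n}{k}}$, then w.h.p. $G(n,r)$ has no independent set of size $k$.
   Context: Here the $n$ points of $G(n,r)$ are chosen independently and uniformly at random on the unit torus (the unit square with wraparound); two points are joined by a straight-line edge iff their distance is at most $r=r(n)$. An independent set is a set of vertices no two of which are adjacent. ''W.h.p.'' means with probability tending to $1$ as $n\to\infty$. *)

From Stdlib Require Import Reals List.
Open Scope R_scope.

(* A configuration of points: point i is (x i) in R^2; only i < n matter. *)
Definition cfg := nat -> (R * R).

Definition in_unit (a : R) : Prop := 0 <= a < 1.

Definition tdist1 (a b : R) : R := Rmin (Rabs (a - b)) (1 - Rabs (a - b)).

(* Distance on the unit torus (unit square with wraparound). *)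
Definition tdist (p q : R * R) : R :=
  sqrt (tdist1 (fst p) (fst q) ^ 2 + tdist1 (snd p) (snd q) ^ 2).

Definition adjacent (r : R) (x : cfg) (i j : nat) : Prop :=
  i <> j /\ tdist (x i) (x j) <= r.

Definition independent_set (n : nat) (r : R) (x : cfg) (S : list nat) : Prop :=
  NoDup S /\ (forall i, In i S -> (i < n)%nat) /\
  (forall i j, In i S -> In j S -> ~ adjacent r x i j).

Definition has_indep_set (n : nat) (r : R) (k : nat) (x : cfg) : Prop :=
  exists S, length S = k /\ independent_set n r x S.

Definition sample (n : nat) (x : cfg) : Prop :=
  forall i, (i < n)%nat -> in_unit (fst (x i)) /\ in_unit (snd (x i)).

(* Closed boxes in (R^2)^n, coordinates i >= n ignored. *)
Record box := mkBox { lo : nat -> R * R; hi : nat -> R * R }.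

Definition in_box (n : nat) (B : box) (x : cfg) : Prop :=
  forall i, (i < n)%nat ->
    fst (lo B i) <= fst (x i) <= fst (hi B i) /\
    snd (lo B i) <= snd (x i) <= snd (hi B i).

Fixpoint prodR (f : nat -> R) (n : nat) : R :=
  match n with O => 1 | S m => prodR f m * f m end.

Definition box_vol (n : nat) (B : box) : R :=
  prodR (fun i => Rmax 0 (fst (hi B i) - fst (lo B i)) *
                  Rmax 0 (snd (hi B i) - snd (lo B i))) n.

(* Lebesgue outer measure of A (a subset of (R^2)^n) is at most eps:
   A has a countable cover by boxes of total volume <= eps. *)
Definition outer_measure_le (n : nat) (A : cfg -> Prop) (eps : R) : Prop :=
  exists Bs : nat -> box,
    (forall x, A x -> exists j, in_box n (Bs j) x) /\
    (forall m, sum_f_R0 (fun j => box_vol n (Bs j)) m <= eps).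

(* Event: G(n,r) has an independent set of size k. Its probability (for n
   i.i.d. uniform points in the unit torus) is the Lebesgue measure of this set. *)
Definition bad_event (n : nat) (r : R) (k : nat) (x : cfg) : Prop :=
  sample n x /\ has_indep_set n r k x.

Definition whp_no_indep_set (r : nat -> R) (k : nat -> nat) : Prop :=
  forall eps, 0 < eps -> exists N, forall n, (N <= n)%nat ->
    outer_measure_le n (bad_event n (r n) (k n)) eps.

From Stdlib Require Import Reals List Lia Lra ZArith.
Open Scope R_scope.

(* The bad event is empty for all large n, by packing.  Cut the torus into
   m x m square cells of side 1/m with m = ceil(2/r): two points of one cell are
   at distance at most r, so an independent set meets each cell at most once and
   has at most m^2 elements, and m^2 < k once k r^2 > 16 and k >= 4.  With
   c = 16 the hypothesis gives k r^2 > 16 ln ln n >= 16 eventually, and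
   k > n / (4 ln n) forces k >= 4 eventually. *)

Definition cell (m : nat) (a : R) : nat := Z.to_nat (up (INR m * a)).

Lemma cell_range m a : (1 <= m)%nat -> in_unit a -> (1 <= cell m a <= m)%nat.
Proof.
  intros Hm [Ha0 Ha1]; unfold cell.
  assert (Hm' : 1 <= INR m) by (apply (le_INR 1); lia).
  destruct (archimed (INR m * a)) as [Hup Hup'].
  assert (Hlo : (0 < up (INR m * a))%Z) by (apply lt_IZR; nra).
  assert (Hhi : (up (INR m * a) < Z.of_nat m + 1)%Z).
  { apply lt_IZR; rewrite plus_IZR, <- INR_IZR_INZ; nra. }
  lia.
Qed.

Lemma cell_eq_dist_lt m a b : (1 <= m)%nat -> in_unit a -> in_unit b ->
  cell m a = cell m b -> INR m * Rabs (a - b) < 1.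
Proof.
  intros Hm [Ha0 _] [Hb0 _] Hab; unfold cell in Hab.
  assert (Hm' : 1 <= INR m) by (apply (le_INR 1); lia).
  destruct (archimed (INR m * a)) as [Ha Ha'].
  destruct (archimed (INR m * b)) as [Hb Hb'].
  assert (Hpa : (0 < up (INR m * a))%Z) by (apply lt_IZR; nra).
  assert (Hpb : (0 < up (INR m * b))%Z) by (apply lt_IZR; nra).
  apply Z2Nat.inj in Hab; try lia.
  rewrite Hab in Ha, Ha'.
  rewrite <- Rabs_pos_eq with (INR m) by lra; rewrite <- Rabs_mult.
  apply Rabs_def1; lra.
Qed.

Lemma tdist1_le_Rabs a b : in_unit a -> in_unit b -> 0 <= tdist1 a b <= Rabs (a - b).
Proof.
  intros [] []; unfold tdist1; split.
  - assert (Rabs (a - b) < 1) by (apply Rabs_def1; lra).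
    apply Rmin_glb; [apply Rabs_pos | lra].
  - apply Rmin_l.
Qed.

Lemma same_cell_tdist_le m r p q : (1 <= m)%nat -> 2 <= INR m * r ->
  in_unit (fst p) -> in_unit (snd p) -> in_unit (fst q) -> in_unit (snd q) ->
  cell m (fst p) = cell m (fst q) -> cell m (snd p) = cell m (snd q) ->
  tdist p q <= r.
Proof.
  intros Hm Hmr Hp1 Hp2 Hq1 Hq2 E1 E2.
  assert (Hm' : 1 <= INR m) by (apply (le_INR 1); lia).
  pose proof (cell_eq_dist_lt _ _ _ Hm Hp1 Hq1 E1) as C1.
  pose proof (cell_eq_dist_lt _ _ _ Hm Hp2 Hq2 E2) as C2.
  pose proof (tdist1_le_Rabs _ _ Hp1 Hq1) as D1.
  pose proof (tdist1_le_Rabs _ _ Hp2 Hq2) as D2.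
  unfold tdist; rewrite <- (sqrt_pow2 r) by nra; apply sqrt_le_1_alt.
  set (d1 := tdist1 (fst p) (fst q)) in *; set (d2 := tdist1 (snd p) (snd q)) in *.
  assert (Hr : 0 < r) by nra.
  assert (H1 : INR m * d1 <= 1) by nra.
  assert (H2 : INR m * d2 <= 1) by nra.
  assert (H1' : INR m * d1 * r <= r) by nra.
  assert (H2' : INR m * d2 * r <= r) by nra.
  nra.
Qed.

Lemma independent_set_length_le n r m x S : (1 <= m)%nat -> 2 <= INR m * r ->
  sample n x -> independent_set n r x S -> (length S <= m * m)%nat.
Proof.
  intros Hm Hmr Hx [HS [HSn Hind]].
  set (cells := fun i => (cell m (fst (x i)), cell m (snd (x i)))).
  assert (Hinj : ForallPairs (fun i j => cells i = cells j -> i = j) S).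
  { intros i j Hi Hj Eij; destruct (Nat.eq_dec i j) as [|Hne]; [assumption|].
    exfalso; apply (Hind i j Hi Hj); split; [exact Hne|].
    injection Eij as E1 E2.
    destruct (Hx i (HSn i Hi)) as [Hi1 Hi2], (Hx j (HSn j Hj)) as [Hj1 Hj2].
    exact (same_cell_tdist_le m r (x i) (x j) Hm Hmr Hi1 Hi2 Hj1 Hj2 E1 E2). }
  assert (Hincl : incl (map cells S) (list_prod (seq 1 m) (seq 1 m))).
  { intros [a b] Hab; apply in_map_iff in Hab as [i [Ei Hi]].
    injection Ei as <- <-.
    destruct (Hx i (HSn i Hi)) as [H1 H2].
    pose proof (cell_range m _ Hm H1); pose proof (cell_range m _ Hm H2).
    apply in_prod; apply in_seq; lia. }
  pose proof (NoDup_incl_length (NoDup_map_NoDup_ForallPairs cells Hinj HS) Hincl).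
  rewrite length_map, length_prod, !length_seq in *; lia.
Qed.

Lemma grid_side_exists r k : 0 < r -> 4 <= INR k -> 16 < INR k * r ^ 2 ->
  exists m, (1 <= m)%nat /\ 2 <= INR m * r /\ (m * m < k)%nat.
Proof.
  intros Hr Hk Hkr.
  destruct (archimed (2 / r)) as [Hup Hup'].
  assert (Hdiv : 2 / r * r = 2) by (field; lra).
  assert (Hpos : (0 < up (2 / r))%Z) by (apply lt_IZR; pose proof (Rdiv_lt_0_compat 2 r); lra).
  exists (Z.to_nat (up (2 / r))).
  rewrite INR_IZR_INZ, Z2Nat.id by lia.
  set (m := IZR (up (2 / r))) in *.
  split; [lia|split; [nra|]].
  apply INR_lt; rewrite mult_INR, INR_IZR_INZ, Z2Nat.id by lia; fold m.
  (* m r <= 2 + r, and (2 + r)^2 <= 8 + 2 r^2 < k r^2 *)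
  assert (Hmr : 0 <= m * r <= 2 + r) by nra.
  assert (Hsq : (m * r) ^ 2 <= (2 + r) ^ 2) by (apply pow_incr; exact Hmr).
  assert (Hsq' : (2 + r) ^ 2 <= 8 + 2 * r ^ 2) by (pose proof (pow2_ge_0 (r - 2)); nra).
  apply Rmult_lt_reg_r with (r ^ 2); nra.
Qed.

Lemma no_indep_set_of_sqr_gt n r k x : 0 < r -> 4 <= INR k -> 16 < INR k * r ^ 2 ->
  sample n x -> ~ has_indep_set n r k x.
Proof.
  intros Hr Hk Hkr Hx [S [HSk HS]].
  destruct (grid_side_exists r k Hr Hk Hkr) as [m [Hm [Hmr Hmk]]].
  pose proof (independent_set_length_le n r m x S Hm Hmr Hx HS); lia.
Qed.

Lemma outer_measure_le_empty n (A : cfg -> Prop) eps : (1 <= n)%nat -> 0 <= eps ->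
  (forall x, ~ A x) -> outer_measure_le n A eps.
Proof.
  intros Hn Heps HA.
  exists (fun _ => mkBox (fun _ => (0, 0)) (fun _ => (0, 0))); split.
  - intros x Hx; contradiction (HA x Hx).
  - intros m; rewrite sum_eq_R0; [lra|intros j _].
    destruct n as [|n]; [lia|]; unfold box_vol; simpl.
    rewrite Rminus_diag, Rmax_left by lra; ring.
Qed.

Lemma ln_ge_of_exp_le a x : exp a <= x -> a <= ln x.
Proof.
  intros Hx; rewrite <- (ln_exp a) at 1.
  destruct (Rle_lt_or_eq _ _ Hx) as [Hlt|<-]; [|lra].
  apply Rlt_le, ln_increasing; [apply exp_pos|exact Hlt].
Qed.

Lemma twelve_ln_le x : exp 48 <= x -> 12 * ln x <= x.
Proof.
  intros Hx.
  assert (Hx0 : 0 < x) by (pose proof (exp_pos 48); lra).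
  set (y := ln x).
  assert (Hy : 48 <= y) by exact (ln_ge_of_exp_le _ _ Hx).
  (* exp y = exp (y/2)^2 >= (1 + y/2)^2 >= y^2 / 4 >= 12 y *)
  assert (Hsq : exp (y / 2) * exp (y / 2) = x).
  { rewrite <- exp_plus; replace (y / 2 + y / 2) with y by field; apply exp_ln, Hx0. }
  pose proof (exp_ineq1_le (y / 2)).
  nra.
Qed.

Lemma eventually_ge (a : R) : exists N, forall n, (N <= n)%nat -> a <= INR n.
Proof.
  exists (Z.to_nat (up a)); intros n Hn.
  destruct (archimed a) as [Ha _].
  destruct (Z_lt_le_dec (up a) 0) as [Hneg|Hnneg].
  - apply IZR_lt in Hneg; pose proof (pos_INR n); lra.
  - apply le_INR in Hn; rewrite INR_IZR_INZ, Z2Nat.id in Hn by lia; lra.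
Qed.

Lemma four_le_of_div_ln_lt n k : exp 48 <= INR n ->
  INR n / (4 * ln (INR n)) < INR k -> 4 <= INR k.
Proof.
  intros Hn Hk.
  assert (Hln : 0 < ln (INR n)).
  { rewrite <- ln_1; apply ln_increasing; [lra|].
    pose proof (exp_ineq1_le 48); lra. }
  pose proof (twelve_ln_le _ Hn).
  apply Rmult_lt_compat_r with (r := 4 * ln (INR n)) in Hk; [|lra].
  unfold Rdiv in Hk; rewrite Rmult_assoc, Rinv_l, Rmult_1_r in Hk by lra.
  destruct (le_lt_dec 4 k) as [H4|H3].
  - apply (le_INR 4) in H4; simpl in H4; lra.
  - assert (Hk3 : INR k <= INR 3) by (apply le_INR; lia); simpl in Hk3; nra.
Qed.

Lemma one_le_ln_ln x : exp 48 <= x -> 1 <= ln (ln x).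
Proof.
  intros Hx.
  pose proof (ln_ge_of_exp_le _ _ Hx).
  apply ln_ge_of_exp_le; pose proof exp_le_3; lra.
Qed.

Theorem corollary6 :
  exists c : R, 0 < c /\
  forall (k : nat -> nat) (r : nat -> R),
    (exists N, forall n, (N <= n)%nat ->
        INR n / (4 * ln (INR n)) < INR (k n) /\ (k n <= n)%nat) ->
    (exists N, forall n, (N <= n)%nat ->
        r n > sqrt (c * ln (ln (INR n)) / INR (k n))) ->
    whp_no_indep_set r k.
Proof.
  exists 16; split; [lra|].
  intros k r [Nk Hk] [Nr Hr] eps Heps.
  destruct (eventually_ge (exp 48)) as [N0 HN0].
  exists (Nat.max N0 (Nat.max Nk (Nat.max Nr 1))); intros n Hn.
  specialize (HN0 n ltac:(lia)); specialize (Hr n ltac:(lia)).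
  destruct (Hk n ltac:(lia)) as [Hkn _].
  pose proof (four_le_of_div_ln_lt _ _ HN0 Hkn) as Hk4.
  pose proof (one_le_ln_ln _ HN0) as Hlnln.
  set (a := 16 * ln (ln (INR n)) / INR (k n)) in Hr.
  assert (Hka : INR (k n) * a = 16 * ln (ln (INR n))) by (unfold a; field; lra).
  assert (Ha : 0 <= a) by (unfold a; apply Rle_mult_inv_pos; lra).
  pose proof (sqrt_pos a); pose proof (sqrt_sqrt a Ha).
  assert (Hra : a < r n ^ 2) by nra.
  apply outer_measure_le_empty; [lia|lra|].
  intros x [Hx Hind]; apply (no_indep_set_of_sqr_gt n (r n) (k n) x); [lra|lra|nra|exact Hx|exact Hind].
Qed.
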